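(* Let $A$ be a unital $\Bbbk$-algebra which is a domain, and for $k=1,\dots,m$ let $\varphi_k$ be algebra automorphisms and $\partial_k$ locally nilpotent skew derivations of $A$ with respect to $\varphi_k$, such that $\partial_\ell\circ\varphi_k=q_{k\ell}\,\varphi_k\circ\partial_\ell$ for all $1\le k,\ell\le m$, where $\widehat{\mathbf q}=(q_{k\ell})$ is an $m\times m$ matrix over $\Bbbk^\times$ and each $q_{kk}$ is not a root of unity. Let $\varepsilon:A\to\Bbbk$ be an algebra homomorphism with $\varepsilon\circ\varphi_k=\varepsilon$ for all $k$. Let $A_{\mathbf q}$ be the $\Bbbk$-algebra generated by $t_1,\dots,t_m$ subject to $t_\ell t_k=q_{k\ell}t_kt_\ell$ for $k<\ell$. Then $$\Phi(x)=\sum_{a\in\mathbb Z_{\ge0}^m}\varepsilon\big(\partial_m^{(a_m)}\cdots\partial_1^{(a_1)}(x)\big)\,t_1^{a_1}\cdots t_m^{a_m}$$ (a finite sum) defines an algebra homomorphism $\Phi:A\to A_{\mathbf q}$.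
   Context: A skew derivation with respect to $\varphi$ is a linear map $\partial$ with $\partial(ab)=\partial(a)b+\varphi(a)\partial(b)$; locally nilpotent means every element is killed by some power. Divided powers: $\partial_k^{(n)}=\frac{1}{[n]_{q_{kk}}!}\partial_k^n$ with $[n]_r!=\prod_{\ell=1}^n\frac{1-r^\ell}{1-r}$. *)

From HB Require Import structures.
From mathcomp Require Import all_boot all_order all_algebra.
Set Implicit Arguments. Unset Strict Implicit. Unset Printing Implicit Defensive.
Import Order.TTheory GRing.Theory.
Local Open Scope ring_scope.

(* no zero divisors (A need not be commutative) *)
Definition is_domain (R : nzRingType) : Prop :=
  forall x y : R, x * y = 0 -> x = 0 \/ y = 0.

Definition is_alg_hom (k : fieldType) (A B : algType k) (f : A -> B) : Prop :=
  [/\ forall (c : k) (x y : A), f (c *: x + y) = c *: f x + f y,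
      f 1 = 1 &
      forall x y : A, f (x * y) = f x * f y].

Definition is_alg_aut (k : fieldType) (A : algType k) (f : A -> A) : Prop :=
  is_alg_hom f /\ bijective f.

Definition is_alg_char (k : fieldType) (A : algType k) (e : A -> k) : Prop :=
  [/\ forall (c : k) (x y : A), e (c *: x + y) = c * e x + e y,
      e 1 = 1 &
      forall x y : A, e (x * y) = e x * e y].

Definition is_skew_der (k : fieldType) (A : algType k) (phi d : A -> A) : Prop :=
  (forall (c : k) (x y : A), d (c *: x + y) = c *: d x + d y) /\
  (forall x y : A, d (x * y) = d x * y + phi x * d y).

Definition locally_nilpotent (A : nzRingType) (d : A -> A) : Prop :=
  forall x : A, exists n : nat, iter n d x = 0.

Definition is_root_of_unity_q (k : fieldType) (r : k) : Prop :=
  exists n : nat, (0 < n)%N /\ r ^+ n = 1.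

Definition qfact (k : fieldType) (r : k) (n : nat) : k :=
  \prod_(1 <= l < n.+1) ((1 - r ^+ l) / (1 - r)).

Definition dpow (k : fieldType) (A : algType k) (r : k) (d : A -> A) (n : nat)
  (x : A) : A := (qfact r n)^-1 *: iter n d x.

(* d_m^{(a_m)} o ... o d_1^{(a_1)} applied to x (d_1 applied first);
   the divided power of d_i uses q_ii *)
Definition dcomp (k : fieldType) (A : algType k) (m : nat) (q : 'M[k]_m)
  (d : 'I_m -> A -> A) (a : 'I_m -> nat) (x : A) : A :=
  foldl (fun y i => dpow (q i i) (d i) (a i) y) x (enum 'I_m).

Definition Phi_coef (k : fieldType) (A : algType k) (m : nat) (q : 'M[k]_m)
  (d : 'I_m -> A -> A) (eps : A -> k) (a : 'I_m -> nat) (x : A) : k :=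
  eps (dcomp q d a x).

Definition coef_support_in_box (k : fieldType) (A : algType k) (m : nat)
  (q : 'M[k]_m) (d : 'I_m -> A -> A) (eps : A -> k) (N : nat) (x : A) : Prop :=
  forall a : 'I_m -> nat, (exists i, (N <= a i)%N) -> Phi_coef q d eps a x = 0.

Definition Phi_box (k : fieldType) (A B : algType k) (m : nat) (q : 'M[k]_m)
  (d : 'I_m -> A -> A) (eps : A -> k) (t : 'I_m -> B) (N : nat) (x : A) : B :=
  \sum_(a : {ffun 'I_m -> 'I_N})
     Phi_coef q d eps (fun i => nat_of_ord (a i)) x *:
       \prod_(i < m) t i ^+ nat_of_ord (a i).

From HB Require Import structures.
From mathcomp Require Import all_boot all_order all_algebra zify.
Set Implicit Arguments. Unset Strict Implicit. Unset Printing Implicit Defensive.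
Import GRing.Theory.
Local Open Scope ring_scope.

(* Expand along the indices one at a time: Phi_i x = sum_c t_i^c Phi_(i+1) (d_i^(c) x),
   with Phi_(m+1) = eps, the sums being finite by local nilpotency; unfolding gives the box
   sum over [0,N)^m for N large, and enlarging the box adds only vanishing terms.
   Multiplicativity goes by induction on i.  Since q_ii is not a root of unity the divided
   powers obey the q-Leibniz rule d^(n)(xy) = sum_j phi^j (d^(n-j) x) d^(j) y, and the
   relations d_l phi_i = q_il phi_i d_l, eps phi_i = eps, t_l t_i = q_il t_i t_l give the
   twisting identity t_i^c Phi_(i+1) (phi_i^c z) = Phi_(i+1) z t_i^c, which moves the powers
   of t_i to the left so that the product becomes a Cauchy product. *)

Section LinearFunctions.
Variables (R : pzRingType) (U V : lmodType R) (f : U -> V).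
Hypothesis f_linear : linear f.

Let fL : {linear U -> V} := HB.pack f (GRing.isLinear.Build R U V *:%R f f_linear).

Lemma linear_fun0 : f 0 = 0.
Proof. exact: (raddf0 fL). Qed.

Lemma linear_funZ c x : f (c *: x) = c *: f x.
Proof. exact: (linearZ_LR fL). Qed.

Lemma linear_fun_sum n (F : 'I_n -> U) : f (\sum_(i < n) F i) = \sum_(i < n) f (F i).
Proof. exact: (raddf_sum fL). Qed.

End LinearFunctions.

Lemma linear_iter (R : pzRingType) (V : lmodType R) (f : V -> V) n :
  linear f -> linear (iter n f).
Proof. by move=> f_linear; elim: n => [|n IHn] c x y //=; rewrite IHn f_linear. Qed.

Lemma iter_eq0_le (R : pzRingType) (V : lmodType R) (f : V -> V) n n' x :
  linear f -> iter n f x = 0 -> (n <= n')%N -> iter n' f x = 0.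
Proof.
by move=> f_linear fx0 /subnK <-; rewrite iterD fx0 (linear_fun0 (linear_iter _ f_linear)).
Qed.

Lemma iter_scaled_comm (R : pzRingType) (V : lmodType R) (f g : V -> V) (s : R) :
  linear f -> linear g -> (forall x, f (g x) = s *: g (f x)) ->
  forall c e x, iter e f (iter c g x) = s ^+ (c * e) *: iter c g (iter e f x).
Proof.
move=> f_linear g_linear fg c; have fgc x : f (iter c g x) = s ^+ c *: iter c g (f x).
  elim: c x => [|c IHc] x /=; first by rewrite scale1r.
  by rewrite fg IHc linear_funZ // scalerA exprS.
elim=> [|e IHe] x /=; first by rewrite muln0 scale1r.
by rewrite IHe linear_funZ // fgc scalerA -exprD mulnS addnC.
Qed.

Lemma commrX_scaled (R : pzRingType) (B : algType R) (x y : B) (s : R) c e :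
  y * x = s *: (x * y) -> y ^+ e * x ^+ c = s ^+ (c * e) *: (x ^+ c * y ^+ e).
Proof.
move=> yx; have yxc : y * x ^+ c = s ^+ c *: (x ^+ c * y).
  elim: c => [|c IHc]; first by rewrite !expr0 mulr1 mul1r scale1r.
  rewrite exprSr mulrA IHc -scalerAl -[_ * y * x]mulrA yx -scalerAr scalerA.
  by rewrite mulrA -exprSr -exprSr.
elim: e => [|e IHe]; first by rewrite !expr0 muln0 expr0 mulr1 mul1r scale1r.
rewrite exprS -mulrA IHe -scalerAr (mulrA y) yxc -scalerAl -mulrA scalerA -exprD.
by rewrite mulnS addnC.
Qed.

Lemma sum_ord_trunc (V : nmodType) (g : nat -> V) n1 n2 :
  (n1 <= n2)%N -> (forall c, (n1 <= c)%N -> g c = 0) ->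
  \sum_(c < n2) g c = \sum_(c < n1) g c.
Proof.
move=> le_n12 g0; rewrite (big_ord_widen n2 g le_n12) [RHS]big_mkcond /=.
by apply: eq_bigr => i _; case: ifP => // /negbT; rewrite -leqNgt => /g0.
Qed.

Lemma sum_antidiagonal (R : pzSemiRingType) (u v : nat -> R) N :
  \sum_(a < N) \sum_(j < a.+1) u (a - j)%N * v j =
  \sum_(b < N) \sum_(c < N - b) u b * v c.
Proof.
elim: N => [|N IHN]; first by rewrite !big_ord0.
rewrite big_ord_recr /= IHN.
have -> : \sum_(b < N.+1) \sum_(c < N.+1 - b) u b * v c =
          \sum_(b < N.+1) (\sum_(c < N - b) u b * v c + u b * v (N - b)%N).
  by apply: eq_bigr => b _; rewrite subSn ?big_ord_recr // -ltnS.
rewrite big_split /= [X in _ = X + _]big_ord_recr /= subnn big_ord0 addr0.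
congr (_ + _); rewrite (reindex_inj rev_ord_inj) /=; apply: eq_bigr => j _.
by rewrite subSS subKn // -ltnS.
Qed.

Lemma sum_antidiagonal_mul (R : pzSemiRingType) (u v : nat -> R) nu nv N :
  (nu + nv <= N)%N -> (forall b, (nu <= b)%N -> u b = 0) ->
  (forall c, (nv <= c)%N -> v c = 0) ->
  \sum_(a < N) \sum_(j < a.+1) u (a - j)%N * v j =
  (\sum_(b < N) u b) * (\sum_(c < N) v c).
Proof.
move=> leN u0 v0; rewrite sum_antidiagonal mulr_suml; apply: eq_bigr => b _.
rewrite mulr_sumr; have [/u0 ->|lt_b_nu] := leqP nu b.
  by rewrite !big1 // => c _; rewrite mul0r.
have uv0 c : (nv <= c)%N -> u b * v c = 0 by move/v0 ->; rewrite mulr0.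
have le_nv : (nv <= N - b)%N by move: leN lt_b_nu; clear; lia.
by rewrite (sum_ord_trunc le_nv uv0) (sum_ord_trunc (leq_trans le_nv (leq_subr _ _)) uv0).
Qed.

Section QIntegers.
Variables (k : fieldType) (r : k).

Definition qint (n : nat) : k := (1 - r ^+ n) / (1 - r).

Lemma qint0 : qint 0 = 0.
Proof. by rewrite /qint expr0 subrr mul0r. Qed.

Lemma qfact0 : qfact r 0 = 1.
Proof. by rewrite /qfact big_geq. Qed.

Lemma qfactS n : qfact r n.+1 = qfact r n * qint n.+1.
Proof. by rewrite /qfact big_nat_recr. Qed.

Lemma qint_split n j : (j <= n)%N -> r ^+ j * qint (n - j) + qint j = qint n.
Proof.
move=> le_jn; rewrite /qint mulrA -mulrDl mulrBr mulr1 -exprD subnKC //.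
by rewrite addrC addrA subrK.
Qed.

Hypothesis r_not_root : ~ is_root_of_unity_q r.

Lemma not_root_neq1 : r != 1.
Proof. by apply/eqP => r1; apply: r_not_root; exists 1%N; rewrite expr1. Qed.

Lemma qint_neq0 n : (0 < n)%N -> qint n != 0.
Proof.
move=> n_gt0; rewrite /qint mulf_neq0 // ?invr_eq0 subr_eq0 eq_sym.
  by apply/eqP => rn1; apply: r_not_root; exists n.
exact: not_root_neq1.
Qed.

End QIntegers.

Section DividedPowers.
Variables (k : fieldType) (A : algType k) (r : k) (phi d : A -> A).
Hypotheses (phi_linear : linear phi) (d_linear : linear d).
Hypothesis d_mul : forall x y, d (x * y) = d x * y + phi x * d y.
Hypothesis d_phi : forall x, d (phi x) = r *: phi (d x).
Hypothesis r_not_root : ~ is_root_of_unity_q r.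

Local Notation D n := (dpow r d n).

Lemma dpow0 x : D 0 x = x.
Proof. by rewrite /dpow qfact0 invr1 scale1r. Qed.

Lemma dpow_linear n : linear (D n).
Proof.
move=> c x y; rewrite /dpow (linear_iter n d_linear) scalerDr !scalerA.
by rewrite mulrC.
Qed.

Lemma d_dpow n x : d (D n x) = qint r n.+1 *: D n.+1 x.
Proof.
rewrite /dpow linear_funZ // -iterS qfactS scalerA invfM mulrCA.
by rewrite mulfV ?mulr1 // qint_neq0.
Qed.

Lemma dpow_mul n x y :
  D n (x * y) = \sum_(j < n.+1) iter j phi (D (n - j) x) * D j y.
Proof.
elim: n => [|n IHn]; first by rewrite big_ord1 /= !dpow0.
pose T j := iter j phi (D (n.+1 - j) x) * D j y.
have phi_d j z : d (iter j phi z) = r ^+ j *: iter j phi (d z).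
  by rewrite -[d _]/(iter 1 d _) (iter_scaled_comm d_linear phi_linear d_phi) muln1.
have step : qint r n.+1 *: D n.+1 (x * y) =
    \sum_(j < n.+1) ((r ^+ j * qint r (n.+1 - j)) *: T j + qint r j.+1 *: T j.+1).
  rewrite -d_dpow IHn linear_fun_sum //; apply: eq_bigr => j _.
  rewrite d_mul phi_d !d_dpow (linear_funZ (linear_iter j phi_linear)) scalerA.
  rewrite -[phi _ * _]scalerAr -scalerAl.
  by rewrite /T subSS -subSn // -ltnS.
have telescope : \sum_(j < n.+1) ((r ^+ j * qint r (n.+1 - j)) *: T j + qint r j.+1 *: T j.+1)
    = qint r n.+1 *: \sum_(j < n.+2) T j.
  have shiftT : \sum_(j < n.+1) qint r j.+1 *: T j.+1 = \sum_(j < n.+2) qint r j *: T j.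
    by rewrite [RHS]big_ord_recl qint0 scale0r add0r; apply: eq_bigr => j _; rewrite lift0.
  have extendT : \sum_(j < n.+1) (r ^+ j * qint r (n.+1 - j)) *: T j =
                 \sum_(j < n.+2) (r ^+ j * qint r (n.+1 - j)) *: T j.
    by rewrite [RHS]big_ord_recr /= subnn qint0 mulr0 scale0r addr0.
  rewrite big_split /= shiftT extendT -big_split scaler_sumr /=; apply: eq_bigr => j _.
  by rewrite -scalerDl qint_split // -ltnS.
apply: (scalerI (qint_neq0 r_not_root (ltn0Sn n))).
by rewrite step telescope; congr (_ *: _); apply: eq_bigr.
Qed.

End DividedPowers.

Lemma dpow_iter_scaled_comm (k : fieldType) (A : algType k) (r s : k) (f g : A -> A) :
  linear f -> linear g -> (forall x, f (g x) = s *: g (f x)) ->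
  forall c e x, dpow r f e (iter c g x) = s ^+ (c * e) *: iter c g (dpow r f e x).
Proof.
move=> f_linear g_linear fg c e x; rewrite /dpow (iter_scaled_comm f_linear g_linear fg).
by rewrite (linear_funZ (linear_iter c g_linear)) !scalerA mulrC.
Qed.

Section NilpotencyIndex.
Variables (k : fieldType) (A : algType k) (f : A -> A).
Hypotheses (f_linear : linear f) (f_nil : locally_nilpotent f).

Let exists_iter_eq0 x : exists n, iter n f x == 0.
Proof. by have [n fx0] := f_nil x; exists n; apply/eqP. Qed.

Definition nilidx x : nat := ex_minn (exists_iter_eq0 x).

Lemma iter_nilidx x : iter (nilidx x) f x = 0.
Proof. by rewrite /nilidx; case: ex_minnP => n /eqP. Qed.

Lemma nilidx_min x n : iter n f x = 0 -> (nilidx x <= n)%N.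
Proof. by rewrite /nilidx; case: ex_minnP => n0 _ min_n0 /eqP /min_n0. Qed.

Lemma iter_ge_nilidx x n : (nilidx x <= n)%N -> iter n f x = 0.
Proof. exact: iter_eq0_le f_linear (iter_nilidx x). Qed.

Lemma nilidx0 : nilidx 0 = 0%N.
Proof. by apply/eqP; rewrite -leqn0 nilidx_min. Qed.

Lemma dpow_ge_nilidx r n x : (nilidx x <= n)%N -> dpow r f n x = 0.
Proof. by move=> /iter_ge_nilidx fx0; rewrite /dpow fx0 scaler0. Qed.

End NilpotencyIndex.

Section Expansion.
Variables (k : fieldType) (A B : algType k) (m : nat).
Variables (phi d : 'I_m -> A -> A) (q : 'M[k]_m) (eps : A -> k) (t : 'I_m -> B).
Hypotheses (phi_linear : forall i, linear (phi i)) (phi1 : forall i, phi i 1 = 1).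
Hypothesis d_skew : forall i, is_skew_der (phi i) (d i).
Hypothesis d_nil : forall i, locally_nilpotent (d i).
Hypothesis d_phi : forall i l x, d l (phi i x) = q i l *: phi i (d l x).
Hypothesis q_not_root : forall i, ~ is_root_of_unity_q (q i i).
Hypothesis eps_char : is_alg_char eps.
Hypothesis eps_phi : forall i x, eps (phi i x) = eps x.
Hypothesis t_comm : forall i l : 'I_m, (i < l)%N -> t l * t i = q i l *: (t i * t l).

Local Notation D i n := (dpow (q i i) (d i) n).
Local Notation nil_d i := (nilidx (d_nil i)).

Let d_linear i : linear (d i).
Proof. by case: (d_skew i). Qed.

Let d_mul i x y : d i (x * y) = d i x * y + phi i x * d i y.
Proof. by case: (d_skew i). Qed.

Let d1 i : d i 1 = 0.
Proof.
have := d_mul i 1 1; rewrite !mulr1 phi1 mul1r => /(congr1 (fun z => z - d i 1)).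
by rewrite subrr addrK.
Qed.

Let eps0 : eps 0 = 0.
Proof.
case: eps_char => eps_lin _ _; have := eps_lin 1 0 0.
rewrite scale1r addr0 mul1r => /(congr1 (fun z => z - eps 0)).
by rewrite subrr addrK.
Qed.

Let eps_iter i c x : eps (iter c (phi i) x) = eps x.
Proof. by elim: c => //= c IHc; rewrite eps_phi. Qed.

Let iter_ge_nil_d i x n : (nil_d i x <= n)%N -> iter n (d i) x = 0.
Proof. exact: iter_ge_nilidx. Qed.

Let dpow_ge_nil_d i x n : (nil_d i x <= n)%N -> D i n x = 0.
Proof. exact: dpow_ge_nilidx. Qed.

(* [expansion [:: i; ...; m]] is Phi_i of the header, so the theorem's map is
   [expansion (enum 'I_m)]. *)
Fixpoint expansion (s : seq 'I_m) (x : A) : B :=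
  if s is i :: s' then \sum_(c < nil_d i x) t i ^+ c * expansion s' (D i c x)
  else eps x *: 1.

Lemma expansion0 s : expansion s 0 = 0.
Proof. by case: s => [|i s] /=; rewrite ?eps0 ?scale0r // nilidx0 big_ord0. Qed.

Lemma expansion_cons_trunc s i x n : iter n (d i) x = 0 ->
  expansion (i :: s) x = \sum_(c < n) t i ^+ c * expansion s (D i c x).
Proof.
move=> /(nilidx_min (d_nil i)) le_nil /=.
rewrite [RHS](@sum_ord_trunc _ (fun c => t i ^+ c * expansion s (D i c x)) _ _ le_nil) //.
by move=> c /dpow_ge_nil_d ->; rewrite expansion0 mulr0.
Qed.

Lemma expansion_linear s : linear (expansion s).
Proof.
elim: s => [|i s IHs] c x y.
  by case: eps_char => eps_lin _ _; rewrite /= eps_lin scalerDl scalerA.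
pose n := (nil_d i x + nil_d i y + nil_d i (c *: x + y))%N.
have [dx dy dxy] : [/\ iter n (d i) x = 0, iter n (d i) y = 0 & iter n (d i) (c *: x + y) = 0].
  by split; apply: iter_ge_nil_d; rewrite /n; lia.
rewrite (expansion_cons_trunc s dx) (expansion_cons_trunc s dy) (expansion_cons_trunc s dxy).
rewrite scaler_sumr -big_split; apply: eq_bigr => j _.
by rewrite (dpow_linear _ (d_linear i)) IHs mulrDr scalerAr.
Qed.

Lemma expansion1 s : expansion s 1 = 1.
Proof.
elim: s => [|i s IHs]; first by case: eps_char => _ eps1 _; rewrite /= eps1 scale1r.
have d_one : iter 1 (d i) 1 = 0 by exact: d1.
by rewrite (expansion_cons_trunc s d_one) big_ord1 expr0 mul1r dpow0.
Qed.

Lemma expansion_twist s (i : 'I_m) c z : all (fun l : 'I_m => (i < l)%N) s ->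
  t i ^+ c * expansion s (iter c (phi i) z) = expansion s z * t i ^+ c.
Proof.
elim: s z => [|l s IHs] z.
  by rewrite /= eps_iter -scalerAr -scalerAl mulr1 mul1r.
case/andP=> lt_il gt_i_s.
have dz0 : iter (nil_d l z) (d l) (iter c (phi i) z) = 0.
  rewrite (iter_scaled_comm (d_linear l) (phi_linear i) (d_phi i l)) iter_nilidx.
  by rewrite (linear_fun0 (linear_iter c (phi_linear i))) scaler0.
rewrite (expansion_cons_trunc s dz0) (expansion_cons_trunc s (iter_nilidx (d_nil l) z)).
rewrite mulr_sumr mulr_suml; apply: eq_bigr => e _.
rewrite (dpow_iter_scaled_comm _ (d_linear l) (phi_linear i) (d_phi i l)).
rewrite (linear_funZ (expansion_linear s)) -2!scalerAr mulrA scalerAl.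
by rewrite -(commrX_scaled _ _ (t_comm lt_il)) -[LHS]mulrA IHs // mulrA.
Qed.

Lemma expansion_mul s x y : sorted (fun i l : 'I_m => (i < l)%N) s ->
  expansion s (x * y) = expansion s x * expansion s y.
Proof.
elim: s x y => [|i s IHs] x y sorted_s.
  by case: eps_char => _ _ eps_mul; rewrite /= eps_mul -scalerAl mul1r scalerA.
have gt_i_s : all (fun l : 'I_m => (i < l)%N) s.
  by apply: (order_path_min _ sorted_s) => ? ? ?; apply: ltn_trans.
set nx := nil_d i x; set ny := nil_d i y; set n := (nx + ny + nil_d i (x * y))%N.
have [dx dy dxy] : [/\ iter n (d i) x = 0, iter n (d i) y = 0 & iter n (d i) (x * y) = 0].
  by split; apply: iter_ge_nil_d; rewrite /n /nx /ny; lia.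
rewrite (expansion_cons_trunc s dx) (expansion_cons_trunc s dy) (expansion_cons_trunc s dxy).
rewrite -(@sum_antidiagonal_mul _ (fun b => t i ^+ b * expansion s (D i b x))
                                   (fun c => t i ^+ c * expansion s (D i c y)) nx ny); first last.
- by move=> c /dpow_ge_nil_d ->; rewrite expansion0 mulr0.
- by move=> b /dpow_ge_nil_d ->; rewrite expansion0 mulr0.
- by rewrite /n leq_addr.
apply: eq_bigr => a _.
rewrite (dpow_mul (phi_linear i) (d_linear i) (d_mul i) (d_phi i i) (@q_not_root i)).
rewrite (linear_fun_sum (expansion_linear s)) mulr_sumr; apply: eq_bigr => j _.
have le_ja : (j <= a)%N by rewrite -ltnS.
rewrite IHs ?(path_sorted sorted_s) // -{1}(subnK le_ja) exprD -!mulrA.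
by rewrite (mulrA (t i ^+ j)) expansion_twist // !mulrA.
Qed.

Fixpoint nil_bound (s : seq 'I_m) (x : A) : nat :=
  if s is i :: s' then maxn (nil_d i x) (\max_(c < nil_d i x) nil_bound s' (D i c x))
  else 0.

Lemma nil_bound0 s : nil_bound s 0 = 0%N.
Proof. by case: s => [|i s] //=; rewrite nilidx0 big_ord0. Qed.

Lemma nil_bound_dpow s i c x : (nil_bound s (D i c x) <= nil_bound (i :: s) x)%N.
Proof.
have [lt_c|/dpow_ge_nil_d ->] := ltnP c (nil_d i x); last by rewrite nil_bound0.
apply: leq_trans (leq_maxr _ _).
exact: (leq_bigmax (F := fun c : 'I_(nil_d i x) => nil_bound s (D i c x)) (Ordinal lt_c)).
Qed.

Lemma foldl_dpow0 s (a : 'I_m -> nat) : foldl (fun z i => D i (a i) z) 0 s = 0.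
Proof.
by elim: s => //= i s IHs; rewrite (linear_fun0 (dpow_linear _ (d_linear i) _)).
Qed.

Lemma foldl_dpow_eq0 s (a : 'I_m -> nat) y :
  (exists2 i, i \in s & (nil_bound s y <= a i)%N) ->
  foldl (fun z i => D i (a i) z) y s = 0.
Proof.
elim: s y => [|l s IHs] y [i]; first by rewrite in_nil.
rewrite in_cons => /predU1P [-> | i_s] le_a.
  by rewrite /= dpow_ge_nil_d ?foldl_dpow0 // (leq_trans (leq_maxl _ _) le_a).
by apply: IHs; exists i => //; apply: leq_trans (nil_bound_dpow s l (a l) y) le_a.
Qed.

Lemma nil_bound_coef_support x :
  coef_support_in_box q d eps (nil_bound (enum 'I_m) x) x.
Proof.
move=> a [i le_a]; rewrite /Phi_coef /dcomp foldl_dpow_eq0 ?eps0 //.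
by exists i; rewrite ?mem_enum.
Qed.

Lemma box_sum_expansion N s y (a0 : {ffun 'I_m -> 'I_N}) (L : B) :
  uniq s -> (nil_bound s y <= N)%N ->
  \sum_(a : {ffun 'I_m -> 'I_N} | [forall j, (j \notin s) ==> (a j == a0 j)])
     eps (foldl (fun z i => D i (a i) z) y s) *: (L * \prod_(i <- s) t i ^+ a i)
  = L * expansion s y.
Proof.
elim: s y a0 L => [|i s IHs] y a0 L.
  move=> _ _; rewrite (big_pred1 a0) /= => [|a]; last first.
    by apply/forallP/eqP => [a_a0|-> //]; apply/ffunP => j; apply/eqP/a_a0.
  by rewrite big_nil mulr1 -scalerAr mulr1.
case/andP=> i_s uniq_s bound_y.
rewrite (expansion_cons_trunc s (iter_ge_nil_d (leq_trans (leq_maxl _ _) bound_y))).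
rewrite mulr_sumr (partition_big (fun a : {ffun 'I_m -> 'I_N} => a i) xpredT) //.
apply: eq_bigr => c _; pose a0c := [ffun j => if j == i then c else a0 j].
rewrite mulrA -(IHs (D i c y) a0c) //; last exact: leq_trans (nil_bound_dpow s i c y) bound_y.
apply: eq_big => [a|a /andP [_ /eqP ai]]; last by rewrite /= big_cons ai mulrA.
apply/andP/forallP => [[/forallP agree /eqP ai] j|agree].
  apply/implyP => j_s; rewrite ffunE; have [->|ne_ji] := eqVneq j i; first by rewrite ai.
  by apply: (implyP (agree j)); rewrite in_cons negb_or ne_ji.
split; last by have /implyP/(_ i_s) := agree i; rewrite ffunE eqxx.
apply/forallP => j; apply/implyP; rewrite in_cons negb_or => /andP [ne_ji j_s].
by have /implyP/(_ j_s) := agree j; rewrite ffunE (negbTE ne_ji).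
Qed.

Lemma Phi_box_expansion N x : (0 < N)%N -> (nil_bound (enum 'I_m) x <= N)%N ->
  Phi_box q d eps t N x = expansion (enum 'I_m) x.
Proof.
move=> N_gt0 bound_x; rewrite -[RHS]mul1r.
rewrite -(box_sum_expansion [ffun=> Ordinal N_gt0] 1 (enum_uniq _) bound_x).
rewrite /Phi_box [RHS](eq_bigl xpredT) => [|a]; last by apply/forallP => j; rewrite mem_enum.
by apply: eq_bigr => a _; rewrite mul1r; congr (_ *: _); rewrite enumT unlock.
Qed.

Lemma eq_Phi_coef (a b : 'I_m -> nat) x :
  a =1 b -> Phi_coef q d eps a x = Phi_coef q d eps b x.
Proof.
by move=> eq_ab; rewrite /Phi_coef /dcomp; elim: (enum 'I_m) x => //= i s IHs x; rewrite eq_ab.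
Qed.

Lemma Phi_box_widen N M x : (N <= M)%N -> coef_support_in_box q d eps N x ->
  Phi_box q d eps t N x = Phi_box q d eps t M x.
Proof.
move=> le_NM supp.
pose widen (a : {ffun 'I_m -> 'I_N}) := [ffun i => widen_ord le_NM (a i)].
rewrite /Phi_box [RHS](bigID (mem [set widen a | a in setT])) /=.
rewrite [X in _ = _ + X]big1 ?addr0 => [|a /negP not_widen].
  rewrite big_imset /= => [|a b _ _ /ffunP eq_ab]; last first.
    by apply/ffunP => i; apply/val_inj; have := congr1 val (eq_ab i); rewrite !ffunE.
  apply: eq_big => [a|a _]; first by rewrite in_setT.
  rewrite (@eq_Phi_coef (fun i => widen a i) (fun i => a i)) => [|i]; last by rewrite ffunE.
  by congr (_ *: _); apply: eq_bigr => i _; rewrite ffunE.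
have [/forallP lt_aN|/forallPn [i]] := boolP [forall i, (a i < N)%N].
  case: not_widen; apply/imsetP; exists [ffun i => Ordinal (lt_aN i)] => //.
  by apply/ffunP => i; apply/val_inj; rewrite !ffunE.
by rewrite -leqNgt => le_Nai; rewrite supp ?scale0r //; exists i.
Qed.

Lemma expansion_Phi_box N x : coef_support_in_box q d eps N x ->
  expansion (enum 'I_m) x = Phi_box q d eps t N x.
Proof.
move=> supp; pose M := (maxn N (nil_bound (enum 'I_m) x)).+1.
rewrite (Phi_box_widen (_ : N <= M)%N supp) ?Phi_box_expansion //; rewrite /M; lia.
Qed.

Lemma expansion_is_alg_hom : is_alg_hom (expansion (enum 'I_m)).
Proof.
split; [exact: expansion_linear | exact: expansion1 | move=> x y].
by apply: expansion_mul; have := iota_ltn_sorted 0 m; rewrite -val_enum_ord sorted_map.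
Qed.

End Expansion.

Theorem mainTheorem13 (k : fieldType) (A : algType k) (m : nat)
  (phi d : 'I_m -> A -> A) (q : 'M[k]_m) (eps : A -> k) :
  is_domain A ->
  (forall i, is_alg_aut (phi i)) ->
  (forall i, is_skew_der (phi i) (d i)) ->
  (forall i, locally_nilpotent (d i)) ->
  (forall i l : 'I_m, forall x : A, d l (phi i x) = q i l *: phi i (d l x)) ->
  (forall i l : 'I_m, q i l != 0) ->
  (forall i : 'I_m, ~ is_root_of_unity_q (q i i)) ->
  is_alg_char eps ->
  (forall i x, eps (phi i x) = eps x) ->
  forall (B : algType k) (t : 'I_m -> B),
  (forall i l : 'I_m, (i < l)%N -> t l * t i = q i l *: (t i * t l)) ->
  exists Phi : A -> B,
    [/\ forall x : A, exists N : nat, coef_support_in_box q d eps N x,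
        forall (x : A) (N : nat), coef_support_in_box q d eps N x ->
          Phi x = Phi_box q d eps t N x
      & is_alg_hom Phi].
Proof.
move=> _ phi_aut d_skew d_nil d_phi _ q_not_root eps_char eps_phi B t t_comm.
have phi_linear i : linear (phi i) by have [[]] := phi_aut i.
have phi1 i : phi i 1 = 1 by have [[]] := phi_aut i.
exists (expansion q eps t d_nil (enum 'I_m)); split.
- by move=> x; exists (nil_bound q d_nil (enum 'I_m) x); apply: nil_bound_coef_support.
- by move=> x N; apply: expansion_Phi_box.
- exact: expansion_is_alg_hom.
Qed.
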